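(* Let $X$ be a finite connected poset and $\theta\in\mathcal{M}(X)$. Then $\theta\in\mathcal{AM}(X)$ if and only if $s^+_{\theta,\Gamma}(z)-s^-_{\theta,\Gamma}(z)=t^+_{\theta,\Gamma}(z)-t^-_{\theta,\Gamma}(z)$ holds for every $z\in X$ and every closed semiwalk $\Gamma:u_0,\dots,u_m=u_0$ with $m\ge2$.
   Context: For $x<y$, $e_{xy}$ denotes the incidence-algebra basis element and $B=\{e_{xy}:x<y\}$. For a bijection $\theta:B\to B$ and a maximal chain $C:u_1<\dots<u_k$, $\theta$ is increasing on $C$ if there is a maximal chain $D:v_1<\dots<v_k$ with $\theta(e_{u_iu_j})=e_{v_iv_j}$ for all $i<j$, decreasing if $\theta(e_{u_iu_j})=e_{v_{k-j+1}v_{k-i+1}}$ for all $i<j$. $\mathcal{M}(X)$ is the set of bijections $B\to B$ increasing or decreasing on every maximal chain. A semiwalk is a sequence $u_0,\dots,u_m$ with $u_i<u_{i+1}$ or $u_i>u_{i+1}$ for each $i$; a walk is a semiwalk in which moreover one of $u_i,u_{i+1}$ covers the other for each $i$; (semi)walks are closed if $u_0=u_m$. For a closed semiwalk $\Gamma:u_0,\dots,u_m=u_0$ and $z\in X$: $s^+_{\theta,\Gamma}(z)=|\{i: u_i<u_{i+1},\ \exists w>z,\ \theta(e_{zw})=e_{u_iu_{i+1}}\}|$, $s^-_{\theta,\Gamma}(z)=|\{i: u_i>u_{i+1},\ \exists w>z,\ \theta(e_{zw})=e_{u_{i+1}u_i}\}|$, $t^+_{\theta,\Gamma}(z)=|\{i: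 u_i<u_{i+1},\ \exists w<z,\ \theta(e_{wz})=e_{u_iu_{i+1}}\}|$, $t^-_{\theta,\Gamma}(z)=|\{i: u_i>u_{i+1},\ \exists w<z,\ \theta(e_{wz})=e_{u_{i+1}u_i}\}|$, $0\le i\le m-1$. $\theta$ is admissible if $s^+-s^-=t^+-t^-$ at every $z$ for every closed walk; $\mathcal{AM}(X)$ is the set of admissible elements of $\mathcal{M}(X)$. *)

From HB Require Import structures.
From mathcomp Require Import all_boot all_order all_algebra.
Set Implicit Arguments. Unset Strict Implicit. Unset Printing Implicit Defensive.
Import Order.TTheory GRing.Theory Num.Theory.
Local Open Scope order_scope.

Section PosetDefs.
Context {d : Order.disp_t} {X : finPOrderType d}.

(* B = { e_xy : x < y }, represented by the pairs (x,y) with x < y. *)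
Definition Bset := {p : X * X | p.1 < p.2}.

Definition comparable_strict (x y : X) : bool := (x < y) || (y < x).
Definition connected_poset : Prop :=
  forall x y : X, connect comparable_strict x y.

Definition covers (x y : X) : bool := (x < y) && [forall z : X, ~~ ((x < z) && (z < y))].

Definition chain (s : seq X) : bool := sorted <%O s.
Definition maximal_chain (s : seq X) : Prop :=
  chain s /\ forall t : seq X, chain t -> {subset s <= t} -> {subset t <= s}.

Definition increasing_on (theta : Bset -> Bset) (C : seq X) : Prop :=
  exists D : seq X, [/\ maximal_chain D, size D = size C &
    forall (p : Bset) (i j : nat), (i < j)%N -> (j < size C)%N ->
      onth C i = Some (val p).1 -> onth C j = Some (val p).2 ->
      onth D i = Some (val (theta p)).1 /\ onth D j = Some (val (theta p)).2].

(* theta is decreasing on the chain C (0-indexed: v_{k-1-j}, v_{k-1-i}) *)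
Definition decreasing_on (theta : Bset -> Bset) (C : seq X) : Prop :=
  exists D : seq X, [/\ maximal_chain D, size D = size C &
    forall (p : Bset) (i j : nat), (i < j)%N -> (j < size C)%N ->
      onth C i = Some (val p).1 -> onth C j = Some (val p).2 ->
      onth D (size C - 1 - j) = Some (val (theta p)).1 /\
      onth D (size C - 1 - i) = Some (val (theta p)).2].

Definition inM (theta : Bset -> Bset) : Prop :=
  bijective theta /\
  forall C : seq X, maximal_chain C -> increasing_on theta C \/ decreasing_on theta C.

(* A (closed) semiwalk u_0 = x, u_1, ..., u_m is represented by x :: rest,
   with m = size rest. *)
Definition semiwalk (x : X) (rest : seq X) : bool := path comparable_strict x rest.
Definition closed_semiwalk (x : X) (rest : seq X) : bool :=
  semiwalk x rest && (last x rest == x).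
Definition walk (x : X) (rest : seq X) : bool :=
  path (fun a b => covers a b || covers b a) x rest.
Definition closed_walk (x : X) (rest : seq X) : bool :=
  walk x rest && (last x rest == x).

Definition steps (x : X) (rest : seq X) : seq (X * X) := zip (x :: rest) rest.

Definition s_plus (theta : Bset -> Bset) (x : X) (rest : seq X) (z : X) : nat :=
  count (fun e : X * X => (e.1 < e.2) &&
    [exists p : Bset, ((val p).1 == z) && (val (theta p) == e)]) (steps x rest).
Definition s_minus (theta : Bset -> Bset) (x : X) (rest : seq X) (z : X) : nat :=
  count (fun e : X * X => (e.2 < e.1) &&
    [exists p : Bset, ((val p).1 == z) && (val (theta p) == (e.2, e.1))]) (steps x rest).
Definition t_plus (theta : Bset -> Bset) (x : X) (rest : seq X) (z : X) : nat :=
  count (fun e : X * X => (e.1 < e.2) &&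
    [exists p : Bset, ((val p).2 == z) && (val (theta p) == e)]) (steps x rest).
Definition t_minus (theta : Bset -> Bset) (x : X) (rest : seq X) (z : X) : nat :=
  count (fun e : X * X => (e.2 < e.1) &&
    [exists p : Bset, ((val p).2 == z) && (val (theta p) == (e.2, e.1))]) (steps x rest).

Definition balanced (theta : Bset -> Bset) (x : X) (rest : seq X) (z : X) : Prop :=
  ((s_plus theta x rest z)%:Z - (s_minus theta x rest z)%:Z =
   (t_plus theta x rest z)%:Z - (t_minus theta x rest z)%:Z)%R.

Definition admissible (theta : Bset -> Bset) : Prop :=
  forall (x : X) (rest : seq X) (z : X), closed_walk x rest -> balanced theta x rest z.

Definition inAM (theta : Bset -> Bset) : Prop := inM theta /\ admissible theta.

End PosetDefs.

(* An element theta of M(X) carries every 3-chain a < b < c onto a 3-chain, increasingly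
   or decreasingly, and injectivity of theta makes this map on 3-chains injective, hence onto.
   So for u < x < v the theta-preimages of (u,x), (x,v), (u,v) are (a,b), (b,c), (a,c) in some
   order, and the charge of a step u < v, [theta^-1(u,v) starts at z] - [theta^-1(u,v) ends at z],
   is additive along u < x < v.  The balance defect s^+ - s^- - (t^+ - t^-) of a closed semiwalk
   is the sum of the charges of its steps, so refining every step into a walk through covering
   pairs preserves it; conversely a closed walk of positive length is a closed semiwalk of
   length at least 2. *)

From HB Require Import structures.
From mathcomp Require Import all_boot all_order all_algebra.
From mathcomp Require Import ring.
From Stdlib Require Import Classical.
Set Implicit Arguments. Unset Strict Implicit. Unset Printing Implicit Defensive.
Import Order.TTheory GRing.Theory Num.Theory.
Local Open Scope order_scope.

Lemma total_injective_rel_onto (T : finType) (P : pred T) (R : rel T) :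
  (forall t, P t -> exists2 s, P s & R t s) ->
  (forall t1 t2 s, P t1 -> P t2 -> R t1 s -> R t2 s -> t1 = t2) ->
  forall s, P s -> exists2 t, P t & R t s.
Proof.
move=> Rtotal Rinj s Ps.
pose f t := odflt t [pick s | P s && R t s].
have fP t : P t -> P (f t) && R t (f t).
  rewrite /f => Pt; case: pickP => [//|/= none].
  by have [s' Ps' Rts'] := Rtotal t Pt; move: (none s'); rewrite Ps' Rts'.
pose A := [set t | P t].
have f_inj : {in A &, injective f}.
  move=> t1 t2; rewrite !inE => Pt1 Pt2 ef.
  have /andP[_ R1] := fP t1 Pt1; have /andP[_ R2] := fP t2 Pt2.
  by apply: (Rinj _ _ (f t2)) => //; rewrite -ef.
have fA : f @: A = A.
  apply/eqP; rewrite eqEcard card_in_imset // leqnn andbT.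
  by apply/subsetP => _ /imsetP[t + ->]; rewrite !inE => /fP/andP[].
have : s \in f @: A by rewrite fA inE.
by case/imsetP => t; rewrite inE => Pt ->; exists t => //; case/andP: (fP t Pt).
Qed.

Section PosetFacts.
Variables (d : Order.disp_t) (X : finPOrderType d).
Implicit Types (s C : seq X) (a b : X).

Lemma chain_uniq s : chain s -> uniq s.
Proof. exact/sorted_uniq/ltxx/lt_trans. Qed.

Lemma chain_extends_to_maximal s :
  chain s -> exists2 C, maximal_chain C & {subset s <= C}.
Proof.
have [n] := ubnP (#|X| - size s); elim: n s => // n IH s bound cs.
case: (classic (exists t, [/\ chain t, {subset s <= t} & ~ {subset t <= s}])).
  move=> [t [ct st nts]].
  have lt_st : (size s < size t)%N.
    rewrite ltn_neqAle uniq_leq_size ?chain_uniq // andbT.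
    apply: contra_notN nts => /eqP e y.
    by have [_ ->] := uniq_min_size (chain_uniq cs) st (eq_leq (esym e)).
  have t_le : (size t <= #|X|)%N by rewrite -(card_uniqP (chain_uniq ct)) max_card.
  have [C mC sC] := IH t (leq_trans (ltn_sub2l (leq_trans lt_st t_le) lt_st) bound) ct.
  by exists C => // y /st /sC.
move=> nex; exists s => //; split => // t ct st.
by apply: NNPP => nts; apply: nex; exists t.
Qed.

Lemma chain_onth_ltn C i j a b :
  chain C -> onth C i = Some a -> onth C j = Some b -> a < b -> (i < j)%N.
Proof.
move=> cC ha hb ab; rewrite ltnNge leq_eqVlt; apply/negP => /orP[/eqP eji|lji].
  by move: ha; rewrite -eji hb => -[eba]; rewrite eba ltxx in ab.
have iC : (i < size C)%N by rewrite -onthTE ha.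
have jC : (j < size C)%N by rewrite -onthTE hb.
have := sorted_ltn_nth lt_trans a cC (j : nat) (i : nat) jC iC lji.
by rewrite (onth_nth a _ _ _ ha) (onth_nth a _ _ _ hb) => /(lt_trans ab); rewrite ltxx.
Qed.

Definition between (u v y : X) : bool := (u < y < v) || (v < y < u).

Lemma betweenC (u v : X) : between u v =1 between v u.
Proof. by move=> y; rewrite /between orbC. Qed.

Lemma between_trans (u v x y : X) : between u v x -> between u x y -> between u v y.
Proof.
rewrite /between => /orP[]/andP[h1 h2] /orP[]/andP[h3 h4].
- by rewrite h3 (lt_trans h4 h2).
- by have := lt_trans h1 h3; rewrite lt_gtF.
- by have := lt_trans h3 h4; rewrite lt_gtF.
- by rewrite (lt_trans h1 h3) h4 orbT.
Qed.

Lemma card_between_lt (u v x : X) : between u v x -> (#|between u x| < #|between u v|)%N.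
Proof.
move=> uvx; apply/proper_card/properP; split.
  by apply/subsetP => y; exact: between_trans.
by exists x => //; rewrite /in_mem /= /between ltxx !andbF.
Qed.

Lemma between_of_not_covers (u v : X) :
  u < v -> ~~ covers u v -> exists y, between u v y.
Proof.
by rewrite /covers => -> /forallPn[y]; rewrite negbK => uyv; exists y; rewrite /between uyv.
Qed.

Lemma onth_pair (D : seq X) a m m' (e : X * X) :
  onth D m = Some e.1 -> onth D m' = Some e.2 -> e = (nth a D m, nth a D m').
Proof. by case: e => ? ? /= /(onth_nth a) <- /(onth_nth a) <-. Qed.

Lemma steps_cat (x : X) w1 w2 :
  steps x (w1 ++ w2) = steps x w1 ++ steps (last x w1) w2.
Proof. by elim: w1 x => [|y w1 IH] x //=; rewrite -IH. Qed.

End PosetFacts.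

Section Triangles.
Variables (d : Order.disp_t) (X : finPOrderType d) (theta : @Bset d X -> @Bset d X).
Local Notation B := (@Bset d X).

(* The identity outside B; only its values on B are ever used. *)
Definition theta_pair (e : X * X) : X * X := oapp (fun p : B => val (theta p)) e (insub e).

Lemma theta_pairE (p : B) : theta_pair (val p) = val (theta p).
Proof. by rewrite /theta_pair valK. Qed.

Lemma theta_pair_lt (e : X * X) : e.1 < e.2 -> (theta_pair e).1 < (theta_pair e).2.
Proof. by move=> lt_e; rewrite /theta_pair insubT /=; exact: (valP (theta _)). Qed.

Definition increasing3 (t : X * X * X) : bool := let: (a, b, c) := t in a < b < c.

Definition maps_triangle (t s : X * X * X) : bool :=
  let: (a, b, c) := t in let: (u, x, v) := s in
  (theta_pair (a, c) == (u, v)) &&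
  ((theta_pair (a, b) == (u, x)) && (theta_pair (b, c) == (x, v)) ||
   (theta_pair (a, b) == (x, v)) && (theta_pair (b, c) == (u, x))).

Lemma maps_triangle_of_pairs a b c p q r : a < b -> b < c ->
  theta_pair (a, c) = (p, r) ->
  [/\ theta_pair (a, b) = (p, q) & theta_pair (b, c) = (q, r)] \/
  [/\ theta_pair (a, b) = (q, r) & theta_pair (b, c) = (p, q)] ->
  exists2 s, increasing3 s & maps_triangle (a, b, c) s.
Proof.
move=> ab bc eac.
have lt_ab := @theta_pair_lt (a, b) ab; have lt_bc := @theta_pair_lt (b, c) bc.
case=> -[eab ebc]; rewrite eab ebc in lt_ab lt_bc; exists (p, q, r);
  by rewrite /= ?lt_ab ?lt_bc ?eac ?eab ?ebc ?eqxx ?orbT.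
Qed.

Hypothesis theta_inj : injective theta.

Lemma theta_pair_inj (e1 e2 : X * X) :
  e1.1 < e1.2 -> e2.1 < e2.2 -> theta_pair e1 = theta_pair e2 -> e1 = e2.
Proof.
by move=> h1 h2; rewrite /theta_pair !insubT /= => /val_inj/theta_inj/(congr1 val).
Qed.

Lemma maps_triangle_inj t1 t2 s : increasing3 t1 -> increasing3 t2 ->
  maps_triangle t1 s -> maps_triangle t2 s -> t1 = t2.
Proof.
case: t1 t2 s => [[a1 b1] c1] [[a2 b2] c2] [[u x] v] /andP[ab1 bc1] /andP[ab2 bc2].
have ac1 := lt_trans ab1 bc1; have ac2 := lt_trans ab2 bc2.
move=> /andP[/eqP e1 t1] /andP[/eqP e2 t2].
have [ea ec] : (a1, c1) = (a2, c2) by apply: theta_pair_inj => //=; rewrite e1 e2.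
subst a2 c2.
move: t1 t2 => /orP[]/andP[/eqP p1 /eqP q1] /orP[]/andP[/eqP p2 /eqP q2].
1,4: by have [->] : (a1, b1) = (a1, b2) by apply: theta_pair_inj => //=; rewrite p1 p2.
- have [ea _] : (b2, c1) = (a1, b1) by apply: theta_pair_inj => //=; rewrite p1 q2.
  by move: ab2; rewrite ea ltxx.
- have [ea _] : (b1, c1) = (a1, b2) by apply: theta_pair_inj => //=; rewrite p2 q1.
  by move: ab1; rewrite ea ltxx.
Qed.

Hypothesis thetaM : inM theta.

Lemma inM_maps_triangle t : increasing3 t -> exists2 s, increasing3 s & maps_triangle t s.
Proof.
case: t => [[a b] c] /andP[ab bc]; have ac := lt_trans ab bc.
have abc : chain [:: a; b; c] by rewrite /chain /= ab bc.
have [C maxC sC] := chain_extends_to_maximal abc.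
have cC := maxC.1.
have /onthP[i oa] : a \in C by apply: sC; rewrite !inE eqxx.
have /onthP[j ob] : b \in C by apply: sC; rewrite !inE eqxx orbT.
have /onthP[k oc] : c \in C by apply: sC; rewrite !inE eqxx !orbT.
have ij := chain_onth_ltn cC oa ob ab; have jk := chain_onth_ltn cC ob oc bc.
have ik := ltn_trans ij jk.
have kC : (k < size C)%N by rewrite -onthTE oc.
have jC := ltn_trans jk kC.
pose n := size C.
case: thetaM => _ /(_ C maxC) [[D [_ _ HD]] | [D [_ _ HD]]].
- have img (p : B) m m' : (m < m')%N -> (m' < n)%N -> onth C m = Some (val p).1 ->
      onth C m' = Some (val p).2 -> theta_pair (val p) = (nth a D m, nth a D m').
    by move=> mm' m'C om om'; have [] := HD p m m' mm' m'C om om'; rewrite theta_pairE;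
      exact: onth_pair.
  apply: (@maps_triangle_of_pairs _ _ _ (nth a D i) (nth a D j) (nth a D k)) => //.
    exact: (img (Sub (a, c) ac)).
  by left; split; [exact: (img (Sub (a, b) ab)) | exact: (img (Sub (b, c) bc))].
- have img (p : B) m m' : (m < m')%N -> (m' < n)%N -> onth C m = Some (val p).1 ->
      onth C m' = Some (val p).2 ->
      theta_pair (val p) = (nth a D (n - 1 - m'), nth a D (n - 1 - m)).
    by move=> mm' m'C om om'; have [] := HD p m m' mm' m'C om om'; rewrite theta_pairE;
      exact: onth_pair.
  apply: (@maps_triangle_of_pairs _ _ _
    (nth a D (n - 1 - k)) (nth a D (n - 1 - j)) (nth a D (n - 1 - i))) => //.
    exact: (img (Sub (a, c) ac)).
  by right; split; [exact: (img (Sub (a, b) ab)) | exact: (img (Sub (b, c) bc))].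
Qed.

Lemma inM_maps_triangle_onto s :
  increasing3 s -> exists2 t, increasing3 t & maps_triangle t s.
Proof.
apply: total_injective_rel_onto; first exact: inM_maps_triangle.
by move=> t1 t2 s'; exact: maps_triangle_inj.
Qed.

End Triangles.

Section Charge.
Variables (d : Order.disp_t) (X : finPOrderType d) (theta : @Bset d X -> @Bset d X).
Local Notation B := (@Bset d X).
Variable z : X.

Definition charge (e : X * X) : int :=
  (([exists p : B, ((val p).1 == z) && (val (theta p) == e)] : nat)%:Z -
   ([exists p : B, ((val p).2 == z) && (val (theta p) == e)] : nat)%:Z)%R.

Definition step_charge (e : X * X) : int :=
  let: (u, v) := e in
  if u < v then charge (u, v) else if v < u then (- charge (v, u))%R else 0%R.

Definition walk_charge (x : X) (rest : seq X) : int :=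
  (\sum_(e <- steps x rest) step_charge e)%R.

Lemma walk_charge_cat x w1 w2 :
  walk_charge x (w1 ++ w2) = (walk_charge x w1 + walk_charge (last x w1) w2)%R.
Proof. by rewrite /walk_charge steps_cat big_cat. Qed.

Lemma walk_chargeE x rest : walk_charge x rest =
  (((s_plus theta x rest z)%:Z - (s_minus theta x rest z)%:Z) -
   ((t_plus theta x rest z)%:Z - (t_minus theta x rest z)%:Z))%R.
Proof.
rewrite /s_plus /s_minus /t_plus /t_minus /walk_charge.
elim: (steps x rest) => [|[u v] es IH]; first by rewrite big_nil.
rewrite big_cons IH /= !PoszD /step_charge /charge.
case: (boolP (u < v)) => [uv|nuv]; first by rewrite lt_gtF //=; ring.
by case: (v < u); rewrite /= ?add0n; ring.
Qed.

Lemma balancedE x rest : balanced theta x rest z <-> walk_charge x rest = 0%R.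
Proof.
rewrite walk_chargeE /balanced.
by split=> [->|/eqP]; rewrite ?subrr // subr_eq0 => /eqP.
Qed.

Lemma step_chargeC u v : step_charge (v, u) = (- step_charge (u, v))%R.
Proof.
rewrite /step_charge; case: (boolP (u < v)) => [uv|nuv]; first by rewrite lt_gtF.
by case: (v < u); rewrite ?opprK ?oppr0.
Qed.

Hypothesis theta_inj : injective theta.

Lemma charge_theta_pair e : e.1 < e.2 ->
  charge (theta_pair theta e) = (((e.1 == z) : nat)%:Z - ((e.2 == z) : nat)%:Z)%R.
Proof.
move=> lt_e; have preim (p : B) : (val (theta p) == theta_pair theta e) = (val p == e).
  apply/eqP/eqP => [|<-]; last by rewrite theta_pairE.
  by rewrite -theta_pairE => /theta_pair_inj; apply=> //; exact: (valP p).
rewrite /charge; congr (_%:Z - _%:Z)%R; congr nat_of_bool; apply/existsP/idP.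
- by case=> p; rewrite preim => /andP[/eqP <- /eqP ->].
- by move=> ez; exists (Sub e lt_e); rewrite preim SubK eqxx andbT.
- by case=> p; rewrite preim => /andP[/eqP <- /eqP ->].
- by move=> ez; exists (Sub e lt_e); rewrite preim SubK eqxx andbT.
Qed.

Hypothesis thetaM : inM theta.

Lemma step_charge_split u x v : u < x -> x < v ->
  step_charge (u, v) = (step_charge (u, x) + step_charge (x, v))%R.
Proof.
move=> ux xv; have uxv : increasing3 (u, x, v) by rewrite /= ux xv.
have [[[a b] c] /andP[ab bc]] := inM_maps_triangle_onto theta_inj thetaM uxv.
have ac := lt_trans ab bc.
rewrite /= ux xv (lt_trans ux xv) => /andP[/eqP <- /orP[]/andP[/eqP <- /eqP <-]];
  by rewrite !charge_theta_pair //=; ring.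
Qed.

Lemma walk_refines_step u v : comparable_strict u v ->
  exists w, [/\ walk u w, last u w = v & walk_charge u w = step_charge (u, v)].
Proof.
have [n] := ubnP #|between u v|; elim: n u v => // n IH u v card_uv uv.
have [cov|ncov] := boolP (covers u v || covers v u).
  by exists [:: v]; rewrite /walk /walk_charge /= cov big_cons big_nil addr0.
have [x uvx] : exists x, between u v x.
  move: ncov; rewrite negb_or => /andP[nuv nvu].
  case/orP: uv => [uv|vu]; first exact: between_of_not_covers.
  by have [x ?] := between_of_not_covers vu nvu; exists x; rewrite betweenC.
have [w1 [walk1 last1 charge1]] : exists w, [/\ walk u w, last u w = x &
    walk_charge u w = step_charge (u, x)].
  apply: IH; first exact: leq_trans (card_between_lt uvx) _.
  by case/orP: uvx => /andP[ux xv]; rewrite /comparable_strict ?ux ?xv ?orbT.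
have [w2 [walk2 last2 charge2]] : exists w, [/\ walk x w, last x w = v &
    walk_charge x w = step_charge (x, v)].
  apply: IH.
    have vux : between v u x by rewrite betweenC.
    rewrite (eq_card (betweenC x v)) (eq_card (betweenC u v)) in card_uv *.
    exact: leq_trans (card_between_lt vux) _.
  by case/orP: uvx => /andP[ux xv]; rewrite /comparable_strict ?ux ?xv ?orbT.
exists (w1 ++ w2); split.
- by rewrite /walk cat_path -/(walk u w1) walk1 last1.
- by rewrite last_cat last1.
rewrite walk_charge_cat last1 charge1 charge2.
case/orP: uvx => /andP[h1 h2]; first by rewrite (step_charge_split h1 h2).
rewrite (step_chargeC v u) (step_chargeC x u) (step_chargeC v x).
by rewrite (step_charge_split h1 h2) opprD addrC.
Qed.

Lemma walk_refines_semiwalk x rest : semiwalk x rest ->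
  exists w, [/\ walk x w, last x w = last x rest & walk_charge x w = walk_charge x rest].
Proof.
elim: rest x => [|y rest IH] x; first by exists [::].
rewrite /semiwalk /= => /andP[xy yrest].
have [w1 [walk1 last1 charge1]] := walk_refines_step xy.
have [w2 [walk2 last2 charge2]] := IH y yrest.
exists (w1 ++ w2); split.
- by rewrite /walk cat_path -/(walk x w1) walk1 last1.
- by rewrite last_cat last1 last2.
- by rewrite walk_charge_cat last1 charge1 charge2 /walk_charge /= big_cons.
Qed.

End Charge.

Theorem corollary3p2 (d : Order.disp_t) (X : finPOrderType d)
    (theta : @Bset d X -> @Bset d X) :
  @connected_poset d X -> inM theta ->
  (inAM theta <->
   forall (z x : X) (rest : seq X),
     closed_semiwalk x rest -> (2 <= size rest)%N -> balanced theta x rest z).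
Proof.
move=> _ thetaM; have theta_inj := bij_inj thetaM.1; split.
  case=> _ adm z x rest /andP[sw /eqP closed] _.
  have [w [ww lw cw]] := walk_refines_semiwalk z theta_inj thetaM sw.
  apply/balancedE; rewrite -cw; apply/balancedE/adm.
  by rewrite /closed_walk ww lw closed eqxx.
move=> bal; split=> // x rest z /andP[wk /eqP closed].
case: rest wk closed => [|y [|y' rest]] wk closed.
- by apply/balancedE; rewrite /walk_charge big_nil.
- by move: wk; rewrite /= in closed; rewrite /walk /= closed /covers ltxx.
- apply: bal => //; rewrite /closed_semiwalk closed eqxx andbT.
  by apply: sub_path wk => a b /orP[]/andP[ab _]; rewrite /comparable_strict ab ?orbT.
Qed.
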